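(* A forest algebra $\mathcal F$ (finite or infinite) is 2-distributive if and only if it divides a wreath product $\mathcal G_1\wr\mathcal G_2$ of two (possibly infinite) distributive forest algebras $\mathcal G_1,\mathcal G_2$.
   Context: A forest algebra is a pair $(H,V)$ where $H$ is a monoid written additively, $V$ is a monoid written multiplicatively, and $V$ acts faithfully on $H$. For each $h$ there is $I_h\in V$ with $I_h h'=h+h'$, and each $h$ is of the form $v\cdot 0_H$. All forest algebras are horizontally commutative and idempotent. Morphisms preserve the monoid operations, the action and $h\mapsto I_h$. A subalgebra is a pair of subsets closed under all forest algebra operations. A congruence is a pair of equivalence relations on $H$ and $V$ compatible with all operations, and the quotient is formed from the equivalence classes. $(H,V)$ divides $(H',V')$, written $(H,V)\prec(H',V')$, if $(H,V)$ is a quotient of a subalgebra of $(H',V')$. The free forest algebra $\Sigma^\Delta=(H_\Sigma,V_\Sigma)$ has as forest part the finite sets of unordered trees $\alpha[C]$ (with $\alpha\in\Sigma$ and $C$ a finite set of trees), under union. Its contexts are forests with one leaf replaced by a hole. $\pi(f)$ is the prefix-closed set of root-starting label paths of a forest $f$. $(H,V)$ is distributive if $v(h_1+h_2)=vh_1+vh_2$ for all $v,h_1,h_2$. It is 2-distributive if for every finite alphabet $\Sigma$, every morphism $\phi:\Sigma^\Delta\to(H,V)$, every context $v$, and all forests $f_1,f_2$ with $\pi(f_1)=\pi(f_2)$, we have $\phi(v(f_1+f_2))=\phi(vf_1+vf_2)$. Wreath product: $(H_1,V_1)\wr(H_2,V_2)=(H_1\times H_2,\ V_1^{H_2}\times V_2)$.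 The action is $(f,v)(h_1,h_2)=(f(h_2)h_1,\ vh_2)$. Multiplication is $(f,v)(f',v')=(f'',vv')$ with $f''(h)=f(v'h)\cdot f'(h)$. *)

From mathcomp Require Import all_boot.
From Stdlib Require List.
From Stdlib Require Import FunctionalExtensionality.

Set Implicit Arguments.
Unset Strict Implicit.
Unset Printing Implicit Defensive.

Record forest_algebra := ForestAlgebra {
  fH : Type;
  fV : Type;
  hadd : fH -> fH -> fH;
  hzero : fH;
  vmul : fV -> fV -> fV;
  vone : fV;
  act : fV -> fH -> fH;
  ins : fH -> fV;
  haddA : forall x y z, hadd x (hadd y z) = hadd (hadd x y) z;
  hadd0l : forall x, hadd hzero x = x;
  hadd0r : forall x, hadd x hzero = x;
  haddC : forall x y, hadd x y = hadd y x;
  haddI : forall x, hadd x x = x;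
  vmulA : forall u v w, vmul u (vmul v w) = vmul (vmul u v) w;
  vmul1l : forall v, vmul vone v = v;
  vmul1r : forall v, vmul v vone = v;
  actM : forall v w h, act (vmul v w) h = act v (act w h);
  act1 : forall h, act vone h = h;
  act_faithful : forall v w, (forall h, act v h = act w h) -> v = w;
  insE : forall h h', act (ins h) h' = hadd h h';
  act_zero_onto : forall h, exists v, act v hzero = h
}.

Definition distributive (F : forest_algebra) : Prop :=
  forall (v : fV F) (h1 h2 : fH F),
    act v (hadd h1 h2) = hadd (act v h1) (act v h2).

Definition subalgebra (G : forest_algebra) (H0 : fH G -> Prop) (V0 : fV G -> Prop)
  : Prop :=
  ((H0 (hzero G)) /\ ((forall x y, H0 x -> H0 y -> H0 (hadd x y))) /\ (V0 (vone G)) /\ ((forall v w, V0 v -> V0 w -> V0 (vmul v w))) /\ ((forall v h, V0 v -> H0 h -> H0 (act v h))) /\ ((forall h, H0 h -> V0 (ins h)))).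

Definition congruence (G : forest_algebra) (H0 : fH G -> Prop) (V0 : fV G -> Prop)
  (eH : fH G -> fH G -> Prop) (eV : fV G -> fV G -> Prop) : Prop :=
  ((
      (forall x, H0 x -> eH x x)) /\ ((forall x y, H0 x -> H0 y -> eH x y -> eH y x)) /\ ((forall x y z, H0 x -> H0 y -> H0 z -> eH x y -> eH y z -> eH x z)) /\ (
      (forall v, V0 v -> eV v v)) /\ ((forall v w, V0 v -> V0 w -> eV v w -> eV w v)) /\ ((forall u v w, V0 u -> V0 v -> V0 w -> eV u v -> eV v w -> eV u w)) /\ (
      (forall x x' y y', H0 x -> H0 x' -> H0 y -> H0 y' ->
          eH x x' -> eH y y' -> eH (hadd x y) (hadd x' y'))) /\ ((forall v v' w w', V0 v -> V0 v' -> V0 w -> V0 w' ->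
          eV v v' -> eV w w' -> eV (vmul v w) (vmul v' w'))) /\ ((forall v v' h h', V0 v -> V0 v' -> H0 h -> H0 h' ->
          eV v v' -> eH h h' -> eH (act v h) (act v' h'))) /\ ((forall h h', H0 h -> H0 h' -> eH h h' -> eV (ins h) (ins h')))).

(* [@quotient_iso F G H0 V0 eH eV rH rV]: F is isomorphic to the quotient of   *)
(* (H0,V0) by (eH,eV), via h |-> class of rH h and v |-> class of rV v.     *)
Definition quotient_iso (F G : forest_algebra)
  (H0 : fH G -> Prop) (V0 : fV G -> Prop)
  (eH : fH G -> fH G -> Prop) (eV : fV G -> fV G -> Prop)
  (rH : fH F -> fH G) (rV : fV F -> fV G) : Prop :=
  ((
      (forall h, H0 (rH h)) /\ (forall v, V0 (rV v))) /\ (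
      (forall h h', eH (rH h) (rH h') -> h = h') /\
      (forall v v', eV (rV v) (rV v') -> v = v')) /\ ((forall x, H0 x -> exists h, eH x (rH h)) /\
      (forall x, V0 x -> exists v, eV x (rV v))) /\ (
      (forall h h', eH (rH (hadd h h')) (hadd (rH h) (rH h'))) /\
      eH (rH (hzero F)) (hzero G)) /\ ((forall v w, eV (rV (vmul v w)) (vmul (rV v) (rV w))) /\
      eV (rV (vone F)) (vone G)) /\ ((forall v h, eH (rH (act v h)) (act (rV v) (rH h))) /\
      (forall h, eV (rV (ins h)) (ins (rH h))))).

Definition divides (F G : forest_algebra) : Prop :=
  exists (H0 : fH G -> Prop) (V0 : fV G -> Prop)
         (eH : fH G -> fH G -> Prop) (eV : fV G -> fV G -> Prop)
         (rH : fH F -> fH G) (rV : fV F -> fV G),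
    ((subalgebra H0 V0) /\ (congruence H0 V0 eH eV) /\ (@quotient_iso F G H0 V0 eH eV rH rV)).

Section Wreath.
Variables G1 G2 : forest_algebra.

Definition wH : Type := (fH G1 * fH G2)%type.
Definition wV : Type := ((fH G2 -> fV G1) * fV G2)%type.

Definition wadd (x y : wH) : wH := (hadd (fst x) (fst y), hadd (snd x) (snd y)).
Definition wzero : wH := (hzero G1, hzero G2).
Definition wmul (x y : wV) : wV :=
  (fun h => vmul (fst x (act (snd y) h)) (fst y h), vmul (snd x) (snd y)).
Definition wone : wV := (fun _ => vone G1, vone G2).
Definition wact (x : wV) (h : wH) : wH :=
  (act (fst x (snd h)) (fst h), act (snd x) (snd h)).
Definition wins (h : wH) : wV := (fun _ => ins (fst h), ins (snd h)).

Lemma waddA x y z : wadd x (wadd y z) = wadd (wadd x y) z.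
Proof. by rewrite /wadd /= !haddA. Qed.
Lemma wadd0l x : wadd wzero x = x.
Proof. by case: x => a b; rewrite /wadd /= !hadd0l. Qed.
Lemma wadd0r x : wadd x wzero = x.
Proof. by case: x => a b; rewrite /wadd /= !hadd0r. Qed.
Lemma waddC x y : wadd x y = wadd y x.
Proof. by rewrite /wadd haddC [hadd (snd x) _]haddC. Qed.
Lemma waddI x : wadd x x = x.
Proof. by case: x => a b; rewrite /wadd /= !haddI. Qed.
Lemma wmulA u v w : wmul u (wmul v w) = wmul (wmul u v) w.
Proof.
rewrite /wmul /= vmulA; congr pair.
by apply: functional_extensionality => h; rewrite vmulA actM.
Qed.
Lemma wmul1l v : wmul wone v = v.
Proof.
case: v => f v; rewrite /wmul /= vmul1l; congr pair.
by apply: functional_extensionality => h; rewrite vmul1l.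
Qed.
Lemma wmul1r v : wmul v wone = v.
Proof.
case: v => f v; rewrite /wmul /= vmul1r; congr pair.
by apply: functional_extensionality => h; rewrite vmul1r act1.
Qed.
Lemma wactM v w h : wact (wmul v w) h = wact v (wact w h).
Proof. by rewrite /wact /wmul /= !actM. Qed.
Lemma wact1 h : wact wone h = h.
Proof. by case: h => a b; rewrite /wact /= !act1. Qed.
Lemma wact_faithful v w : (forall h, wact v h = wact w h) -> v = w.
Proof.
case: v => f v; case: w => g w /= E.
have Ev : v = w.
  by apply: act_faithful => h2; have := E (hzero G1, h2); case.
rewrite Ev; congr pair.
apply: functional_extensionality => h2; apply: act_faithful => h1.
by have := E (h1, h2); case.
Qed.
Lemma winsE h h' : wact (wins h) h' = wadd h h'.
Proof. by rewrite /wact /wadd /= !insE. Qed.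
Lemma wact_zero_onto h : exists v, wact v wzero = h.
Proof.
by exists (wins h); rewrite winsE wadd0r.
Qed.

Definition wreath : forest_algebra :=
  @ForestAlgebra wH wV wadd wzero wmul wone wact wins
    waddA wadd0l wadd0r waddC waddI wmulA wmul1l wmul1r
    wactM wact1 wact_faithful winsE wact_zero_onto.

End Wreath.

(* The free forest algebra Sigma^Delta, presented by raw syntax modulo the   *)
(* set-semantics equality of unordered trees / finite sets of trees.         *)

Inductive tree (A : Type) : Type := Node : A -> list (tree A) -> tree A.
Arguments Node {A} a cs.
Definition forest (A : Type) : Type := list (tree A).

Inductive teq {A : Type} : tree A -> tree A -> Prop :=
| teq_Node (a : A) (cs ds : forest A) :
    (forall c, List.In c cs -> exists2 d, List.In d ds & teq c d) ->
    (forall d, List.In d ds -> exists2 c, List.In c cs & teq c d) ->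
    teq (Node a cs) (Node a ds).

Definition feq {A : Type} (f g : forest A) : Prop :=
  (forall c, List.In c f -> exists2 d, List.In d g & teq c d) /\
  (forall d, List.In d g -> exists2 c, List.In c f & teq c d).

Fixpoint tmap {A B : Type} (m : A -> B) (t : tree A) : tree B :=
  match t with Node a cs => Node (m a) (List.map (tmap m) cs) end.

(* Contexts: forests with exactly one leaf replaced by a hole.              *)
(* [CHole f] is  [] + f ;  [CIn a c f] is  a[c] + f.                        *)
Inductive context (A : Type) : Type :=
| CHole : forest A -> context A
| CIn : A -> context A -> forest A -> context A.
Arguments CHole {A} f.
Arguments CIn {A} a c f.

Fixpoint ctx_forest {A : Type} (c : context A) : forest (option A) :=
  match c with
  | CHole f => Node None nil :: List.map (tmap Some) f
  | CIn a c' f => Node (Some a) (ctx_forest c') :: List.map (tmap Some) f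
  end.

Definition ceq {A : Type} (v w : context A) : Prop :=
  feq (ctx_forest v) (ctx_forest w).

Fixpoint fill {A : Type} (c : context A) (g : forest A) : forest A :=
  match c with
  | CHole f => (g ++ f)%list
  | CIn a c' f => Node a (fill c' g) :: f
  end.

Definition addsib {A : Type} (c : context A) (g : forest A) : context A :=
  match c with
  | CHole f => CHole (f ++ g)%list
  | CIn a c' f => CIn a c' (f ++ g)%list
  end.

Fixpoint ccomp {A : Type} (v w : context A) : context A :=
  match v with
  | CHole f => addsib w f
  | CIn a c' f => CIn a (ccomp c' w) f
  end.

(* Morphisms Sigma^Delta -> F, given on the raw representatives: they must  *)
(* be constant on equivalence classes and preserve all operations.          *)
Definition free_morphism (S : Type) (F : forest_algebra)
  (phH : forest S -> fH F) (phV : context S -> fV F) : Prop :=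
  (((forall f g, feq f g -> phH f = phH g)) /\ ((forall v w, ceq v w -> phV v = phV w)) /\ ((forall f g, phH (f ++ g)%list = hadd (phH f) (phH g)) /\
      phH nil = hzero F) /\ ((forall v w, phV (ccomp v w) = vmul (phV v) (phV w)) /\
      phV (CHole nil) = vone F) /\ ((forall v f, phH (fill v f) = act (phV v) (phH f))) /\ ((forall f, phV (CHole f) = ins (phH f)))).

Fixpoint path_in {A : Type} (f : forest A) (p : list A) : Prop :=
  match p with
  | nil => True
  | a :: p' => exists cs, List.In (Node a cs) f /\ path_in cs p'
  end.

Definition same_paths {A : Type} (f g : forest A) : Prop :=
  forall p, path_in f p <-> path_in g p.

Definition two_distributive (F : forest_algebra) : Prop :=
  forall (S : finType) (phH : forest S -> fH F) (phV : context S -> fV F),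
    free_morphism phH phV ->
    forall (v : context S) (f1 f2 : forest S),
      same_paths f1 f2 ->
      phH (fill v (f1 ++ f2)%list) = phH (fill v f1 ++ fill v f2)%list.

From mathcomp Require Import all_boot.
From Stdlib Require List.
From Stdlib Require Import FunctionalExtensionality PropExtensionality.
From Stdlib Require Import ProofIrrelevance Classical ClassicalEpsilon.

(* In a wreath product G1 ≀ G2 of distributive algebras, the G2-coordinate of
   a forest only depends on its set of paths, because G2 is distributive. Hence
   if f1 and f2 have the same paths, a context acts on both through the same
   element of G1, and distributivity of G1 gives 2-distributivity. This
   property passes to divisors.

   Conversely, type every node of a forest over the contexts of F by its letter
   together with the path set of its children. Siblings of equal type can be
   merged without changing the value in F, which is where 2-distributivity is
   used; so the value of a forest only depends on its paths of types. The pair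
   (paths of types, paths) is computed in the wreath product of two powerset
   algebras, and F is a quotient of the subalgebra of pairs coming from forests. *)

Set Implicit Arguments.
Unset Strict Implicit.
Unset Printing Implicit Defensive.

(** * Evaluation of forests *)

Section ForestAlgebraTheory.
Variable F : forest_algebra.
Implicit Types x y z : fH F.

Definition hle x y := hadd x y = y.

Lemma hle_trans x y z : hle x y -> hle y z -> hle x z.
Proof. by rewrite /hle => Exy Eyz; rewrite -Eyz haddA Exy. Qed.

Lemma hle_antisym x y : hle x y -> hle y x -> x = y.
Proof. by rewrite /hle => Exy Eyx; rewrite -Exy -{1}Eyx haddC. Qed.

Lemma hle_haddl x y : hle x (hadd x y).
Proof. by rewrite /hle haddA haddI. Qed.

Lemma hle_haddr x y : hle y (hadd x y).
Proof. by rewrite haddC; apply: hle_haddl. Qed.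

Lemma hle_hadd x y z : hle x z -> hle y z -> hle (hadd x y) z.
Proof. by rewrite /hle => Exz Eyz; rewrite -haddA Eyz. Qed.

Lemma hle0 x : hle (hzero F) x.
Proof. exact: hadd0l. Qed.

Lemma ins_hadd x y : ins (hadd x y) = vmul (ins x) (ins y).
Proof. by apply: act_faithful => h; rewrite actM !insE haddA. Qed.

Lemma ins_hzero : ins (hzero F) = vone F.
Proof. by apply: act_faithful => h; rewrite act1 insE hadd0l. Qed.

Definition hsum (s : list (fH F)) : fH F := foldr (@hadd F) (hzero F) s.

Lemma hsum_cat s1 s2 : hsum (s1 ++ s2)%list = hadd (hsum s1) (hsum s2).
Proof. by elim: s1 => [|x s1 IH] /=; rewrite ?hadd0l // IH haddA. Qed.

Lemma hle_hsum x s : List.In x s -> hle x (hsum s).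
Proof.
elim: s => [|y s IH] //= [<-|/IH]; first exact: hle_haddl.
by move/hle_trans; apply; apply: hle_haddr.
Qed.

Lemma hsum_hle s y : (forall x, List.In x s -> hle x y) -> hle (hsum s) y.
Proof.
elim: s => [|x s IH] Hs /=; first exact: hle0.
by apply: hle_hadd; [apply: Hs; left | apply: IH => z Hz; apply: Hs; right].
Qed.

End ForestAlgebraTheory.

Definition tree_ind_in (A : Type) (P : tree A -> Prop)
    (IH : forall a cs, (forall c, List.In c cs -> P c) -> P (Node a cs)) :
    forall t, P t :=
  fix tree_ind_in t :=
    let: Node a cs := t in
    IH a cs ((fix in_list (l : forest A) : forall c, List.In c l -> P c :=
      match l with
      | nil => fun c none => False_ind _ none
      | d :: l' => fun c Hc => match Hc with
        | or_introl E => eq_ind d P (tree_ind_in d) c E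
        | or_intror Hc' => in_list l' c Hc'
        end
      end) cs).

Section Fold.
Variables (F : forest_algebra) (A : Type) (phi : A -> fH F -> fH F).

Fixpoint teval (t : tree A) : fH F :=
  let: Node a cs := t in phi a (hsum (List.map teval cs)).

Definition feval (f : forest A) : fH F := hsum (List.map teval f).

Lemma teval_Node a cs : teval (Node a cs) = phi a (feval cs).
Proof. by []. Qed.

Lemma feval_cons t f : feval (t :: f) = hadd (teval t) (feval f).
Proof. by []. Qed.

Lemma feval_cat f g : feval (f ++ g)%list = hadd (feval f) (feval g).
Proof. by rewrite /feval List.map_app hsum_cat. Qed.

Lemma feval_hle f g :
  (forall c, List.In c f -> exists2 d, List.In d g & teval c = teval d) ->
  hle (feval f) (feval g).
Proof.
move=> Hfg; apply: hsum_hle => _ /List.in_map_iff [c [<- Hc]].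
by have [d Hd ->] := Hfg c Hc; apply: hle_hsum; apply: List.in_map.
Qed.

Lemma teval_teq t t' : teq t t' -> teval t = teval t'.
Proof.
elim/tree_ind_in: t t' => a cs IH t' Ht.
inversion Ht as [a' cs' ds Hcs Hds]; subst.
rewrite !teval_Node; congr (phi a _); apply: hle_antisym; apply: feval_hle.
- by move=> c Hc; have [d Hd Hcd] := Hcs c Hc; exists d => //; apply: IH.
- by move=> d Hd; have [c Hc Hcd] := Hds d Hd; exists c => //; symmetry; apply: IH.
Qed.

Lemma feval_feq f g : feq f g -> feval f = feval g.
Proof.
case=> Hfg Hgf; apply: hle_antisym; apply: feval_hle.
- by move=> c Hc; have [d Hd Hcd] := Hfg c Hc; exists d => //; apply: teval_teq.
- by move=> d Hd; have [c Hc Hcd] := Hgf d Hd; exists c => //; symmetry; apply: teval_teq.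
Qed.

End Fold.

Fixpoint tletters (A : Type) (t : tree A) : list A :=
  let: Node a cs := t in a :: List.flat_map (@tletters A) cs.

Definition fletters (A : Type) (f : forest A) : list A :=
  List.flat_map (@tletters A) f.

Lemma feval_tmap (F : forest_algebra) (A B : Type) (phi : A -> fH F -> fH F)
    (m : B -> A) (f : forest B) :
  feval phi (List.map (tmap m) f) = feval (fun b => phi (m b)) f.
Proof.
have teval_tmap t : teval phi (tmap m t) = teval (fun b => phi (m b)) t.
  elim/tree_ind_in: t => b cs IH /=; rewrite List.map_map.
  by congr (phi _ (hsum _)); apply: List.map_ext_in.
by rewrite /feval List.map_map; congr hsum; apply: List.map_ext => t.
Qed.

Lemma feval_eq_in (F : forest_algebra) (A : Type) (phi phi' : A -> fH F -> fH F)
    (f : forest A) :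
  (forall a, List.In a (fletters f) -> phi a = phi' a) -> feval phi f = feval phi' f.
Proof.
have forest_eq g : (forall t, List.In t g -> (forall a, List.In a (tletters t) ->
    phi a = phi' a) -> teval phi t = teval phi' t) ->
    (forall a, List.In a (fletters g) -> phi a = phi' a) -> feval phi g = feval phi' g.
  move=> IH Hg; congr hsum; apply: List.map_ext_in => t Ht; apply: IH => // a Ha.
  by apply: Hg; apply/List.in_flat_map; exists t.
apply: (forest_eq) => t _; elim/tree_ind_in: t => a cs IH Ht /=.
rewrite Ht; last by left.
by congr (phi' a _); apply: forest_eq => // b Hb; apply: Ht; right.
Qed.

Section LetterEvaluation.
Variables (F : forest_algebra) (A : Type) (l : A -> fV F).

Definition ev (f : forest A) : fH F := feval (fun a => act (l a)) f.

Fixpoint evc (c : context A) : fV F :=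
  match c with
  | CHole f => ins (ev f)
  | CIn a c' f => vmul (ins (ev f)) (vmul (l a) (evc c'))
  end.

Lemma ev_cons a cs f : ev (Node a cs :: f) = hadd (act (l a) (ev cs)) (ev f).
Proof. by []. Qed.

Lemma ev_node a cs : ev [:: Node a cs] = act (l a) (ev cs).
Proof. exact: hadd0r. Qed.

Lemma ev_cat f g : ev (f ++ g)%list = hadd (ev f) (ev g).
Proof. exact: feval_cat. Qed.

Lemma ev_fill c g : ev (fill c g) = act (evc c) (ev g).
Proof.
elim: c => [f|a c IH f] /=; first by rewrite ev_cat insE haddC.
by rewrite ev_cons IH !actM insE haddC.
Qed.

Lemma evc_addsib c f : evc (addsib c f) = vmul (ins (ev f)) (evc c).
Proof.
by case: c => [g|a c g] /=; rewrite ev_cat ?vmulA -ins_hadd haddC.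
Qed.

Lemma evc_ccomp v w : evc (ccomp v w) = vmul (evc v) (evc w).
Proof.
elim: v => [f|a c IH f] /=; first exact: evc_addsib.
by rewrite IH !vmulA.
Qed.

Lemma act_evc c h : act (evc c) h =
  feval (fun o x => if o is Some a then act (l a) x else h) (ctx_forest c).
Proof.
elim: c => [f|a c IH f] /=; rewrite feval_cons teval_Node feval_tmap.
  by rewrite insE haddC.
by rewrite !actM insE -IH haddC.
Qed.

Lemma ev_free_morphism : free_morphism ev evc.
Proof.
split; first by move=> f g; apply: feval_feq.
split.
  by move=> v w Hvw; apply: act_faithful => h; rewrite !act_evc; apply: feval_feq.
split; first by split; [exact: ev_cat|].
split; first by split; [exact: evc_ccomp|exact: ins_hzero].
by split; [exact: ev_fill|].
Qed.

End LetterEvaluation.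

Lemma ev_related (F G : forest_algebra) (A : Type) (l : A -> fV F) (l' : A -> fV G)
    (R : fH F -> fH G -> Prop) :
  R (hzero F) (hzero G) ->
  (forall x x' y y', R x x' -> R y y' -> R (hadd x y) (hadd x' y')) ->
  (forall a x x', R x x' -> R (act (l a) x) (act (l' a) x')) ->
  forall f, R (ev l f) (ev l' f).
Proof.
move=> R0 Radd Ract.
have R_forest f : (forall t, List.In t f -> R (ev l [:: t]) (ev l' [:: t])) ->
    R (ev l f) (ev l' f).
  elim: f => [|t f IH] Hf //; rewrite -[t :: f]/([:: t] ++ f)%list !ev_cat.
  by apply: Radd; [apply: Hf; left | apply: IH => u Hu; apply: Hf; right].
move=> f; apply: (R_forest) => t _; elim/tree_ind_in: t => a cs IH.
by rewrite !ev_node; apply: Ract; apply: R_forest.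
Qed.

Lemma free_morphism_evE (S : Type) (F : forest_algebra)
    (phH : forest S -> fH F) (phV : context S -> fV F) :
  free_morphism phH phV ->
  forall f, phH f = ev (fun a => phV (CIn a (CHole nil) nil)) f.
Proof.
case=> _ [_ [[phH_cat phH_nil] [_ [phH_fill _]]]].
pose l a := phV (CIn a (CHole nil) nil).
have phH_forest f : (forall t, List.In t f -> phH [:: t] = ev l [:: t]) ->
    phH f = ev l f.
  elim: f => [|t f IH] Hf //; rewrite -[t :: f]/([:: t] ++ f)%list phH_cat ev_cat.
  by rewrite Hf ?IH //; [move=> u Hu; apply: Hf; right | left].
move=> f; apply: (phH_forest) => t _; elim/tree_ind_in: t => a cs IH.
by rewrite ev_node -phH_forest // -phH_fill /= List.app_nil_r.
Qed.

(** * Forests with the same key paths have the same value *)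

Section KeyPaths.
Variables (A K : Type) (key : A -> forest A -> K).

Fixpoint key_path (f : forest A) (q : list K) : Prop :=
  if q is k :: q' then
    exists a cs, [/\ List.In (Node a cs) f, key a cs = k & key_path cs q']
  else True.

Lemma key_path_cat f g q : key_path (f ++ g)%list q <-> key_path f q \/ key_path g q.
Proof.
case: q => [|k q] /=; first by split; [left|].
split.
  by move=> [a [cs [/List.in_app_iff[]]]] Hin Hk Hq; [left|right]; exists a, cs.
by case=> [[a [cs [Hin Hk Hq]]]|[a [cs [Hin Hk Hq]]]]; exists a, cs;
  split => //; apply/List.in_app_iff; [left|right].
Qed.

Lemma key_path_cons b cs f k q :
  key_path (Node b cs :: f) (k :: q) <->
  (key b cs = k /\ key_path cs q) \/ key_path f (k :: q).
Proof.
split.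
  by move=> [a [cs' [[[<- <-]|Hin] Hk Hq]]]; [left|right; exists a, cs'].
case=> [[Hk Hq]|[a [cs' [Hin Hk Hq]]]]; first by exists b, cs; split => //; left.
by exists a, cs'; split => //; right.
Qed.

End KeyPaths.

Section Size.
Variable A : Type.

Fixpoint tsize (t : tree A) : nat :=
  let: Node _ cs := t in (sumn (List.map tsize cs)).+1.

Definition fsize (f : forest A) : nat := sumn (List.map tsize f).

Lemma fsize_cons a cs f : fsize (Node a cs :: f) = (fsize cs).+1 + fsize f.
Proof. by []. Qed.

Lemma fsize_cat f g : fsize (f ++ g)%list = fsize f + fsize g.
Proof. by elim: f => [|t f IH] //=; rewrite -addnA -IH. Qed.

End Size.

(* Siblings with equal keys can be merged into one node without changing the *)
(* value; merging recursively yields a forest determined by its key paths.    *)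
Section KeyDeterminedValues.
Variables (F : forest_algebra) (A K : Type) (l : A -> fV F).
Variable key : A -> forest A -> K.
Hypothesis key_letter : forall a a' cs cs', key a cs = key a' cs' -> a = a'.
Hypothesis key_cat : forall a cs cs',
  key a cs = key a cs' -> key a (cs ++ cs')%list = key a cs.
Hypothesis act_ev_cat : forall a cs cs', key a cs = key a cs' ->
  act (l a) (ev l (cs ++ cs')%list) = hadd (act (l a) (ev l cs)) (act (l a) (ev l cs')).

Local Notation key_path := (key_path key).

Lemma key_merge_children f a cs : List.In (Node a cs) f ->
  exists C, [/\ fsize C < fsize f, key a C = key a cs,
    forall q, key_path f (key a cs :: q) -> key_path C q
    & hle (act (l a) (ev l C)) (ev l f)].
Proof.
elim: f cs => [|[b ds] f IH] cs Hin //.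
rewrite ev_cons fsize_cons.
have [[cs' [Hcs' Hk]]|Hnone] :=
  classic (exists cs', List.In (Node a cs') f /\ key a cs' = key a cs).
- have [C [sizeC keyC pathC hleC]] := IH cs' Hcs'; rewrite Hk in keyC pathC.
  have hleC' := hle_trans hleC (hle_haddr (act (l b) (ev l ds)) _).
  have [Hb|Hb] := classic (key b ds = key a cs).
  + have Eba := key_letter Hb; subst b.
    exists (ds ++ C)%list; split.
    * by rewrite fsize_cat addSn ltnS leq_add2l ltnW.
    * by rewrite key_cat ?Hb // keyC.
    * by move=> q /key_path_cons [[_ Hq]|/pathC Hq]; apply/key_path_cat; [left|right].
    * rewrite act_ev_cat; last by rewrite Hb keyC.
      exact: hle_hadd (hle_haddl _ _) hleC'.
  + exists C; split => //.
    * exact: leq_trans sizeC (leq_addl _ _).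
    * by move=> q /key_path_cons [[/Hb]|/pathC].
- have [Eb Eds] : b = a /\ ds = cs.
    by case: Hin => [[-> ->]|Hin] //; case: Hnone; exists cs.
  subst b ds; exists cs; split => //.
  + by rewrite addSn ltnS leq_addr.
  + move=> q /key_path_cons [[_ //]|[a' [cs' [Hin' Hk _]]]].
    by have Ea := key_letter Hk; subst a'; case: Hnone; exists cs'.
  + exact: hle_haddl.
Qed.

Lemma ev_hle_of_key_path_sub f g :
  (forall q, key_path g q -> key_path f q) -> hle (ev l g) (ev l f).
Proof.
move: {2}(fsize f).+1 (ltnSn (fsize f)) => n.
elim: n f g => [|n IHn] f g // size_f.
elim: g => [|[a ds] g IHg] sub_gf; first exact: hle0.
rewrite ev_cons; apply: hle_hadd; last first.
  by apply: IHg => -[|k q] // Hq; apply: sub_gf; apply/key_path_cons; right.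
have [b [cs [Hin Hk _]]] : key_path f [:: key a ds].
  by apply: sub_gf; exists a, ds; split => //; left.
have Eba := key_letter Hk; subst b.
have [C [sizeC keyC pathC hleC]] := key_merge_children Hin.
rewrite Hk in keyC pathC; apply: hle_trans hleC.
have hle_ds : hle (ev l ds) (ev l C).
  apply: IHn; first exact: leq_trans sizeC size_f.
  by move=> q Hq; apply: pathC; apply: sub_gf; apply/key_path_cons; left.
have := act_ev_cat keyC.
by rewrite ev_cat haddC hle_ds /hle haddC => <-.
Qed.

Lemma ev_key_path_eq f g :
  (forall q, key_path f q <-> key_path g q) -> ev l f = ev l g.
Proof.
by move=> E; apply: hle_antisym; apply: ev_hle_of_key_path_sub => q /E.
Qed.

End KeyDeterminedValues.

Lemma key_path_letter (A : Type) (f : forest A) q :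
  key_path (fun a _ => a) f q <-> path_in f q.
Proof.
elim: q f => [|k q IH] f //=; split.
  by move=> [a [cs [Hin <- /IH Hq]]]; exists cs.
by move=> [cs [Hin /IH Hq]]; exists k, cs.
Qed.

Lemma distributive_ev_paths (G : forest_algebra) (A : Type) (l : A -> fV G) f g :
  distributive G -> same_paths f g -> ev l f = ev l g.
Proof.
move=> distG Hfg; apply: (@ev_key_path_eq _ _ _ l (fun a _ => a)) => //.
- by move=> a cs cs' _; rewrite ev_cat distG.
- by move=> q; rewrite !key_path_letter.
Qed.

(** * Divisors of wreath products of distributive algebras *)

Lemma wreath_act_hadd (G1 G2 : forest_algebra) (w : fV (wreath G1 G2))
    (x y : fH (wreath G1 G2)) :
  distributive G1 -> snd x = snd y -> act w (hadd x y) = hadd (act w x) (act w y).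
Proof.
case: w x y => [g w] [x1 x2] [y1 y2] distG1 /= <-.
by rewrite /wact /wadd /= distG1 !haddI.
Qed.

Lemma ev_wreath_snd (G1 G2 : forest_algebra) (A : Type) (l : A -> fV (wreath G1 G2)) f :
  snd (ev l f) = ev (fun a => snd (l a)) f.
Proof.
apply: (@ev_related (wreath G1 G2) G2 A l _ (fun x y => snd x = y)) => //.
- by move=> x x' y y' <- <-.
- by move=> a x x' <-.
Qed.

Lemma two_distributive_wreath (G1 G2 : forest_algebra) :
  distributive G1 -> distributive G2 -> two_distributive (wreath G1 G2).
Proof.
move=> distG1 distG2 S phH phV phi v f1 f2 Hp.
rewrite !(free_morphism_evE phi) ev_cat !ev_fill ev_cat.
apply: wreath_act_hadd => //.
by rewrite !ev_wreath_snd; apply: distributive_ev_paths.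
Qed.

Lemma two_distributive_divides (F G : forest_algebra) :
  divides F G -> two_distributive G -> two_distributive F.
Proof.
move=> [H0 [V0 [eH [eV [rH [rV [subH0 [congH iso]]]]]]]] twoG S phH phV phi v f1 f2 Hp.
case: subH0 => [H0_0 [H0_add [_ [_ [H0_act _]]]]].
case: congH => [_ [eH_sym [eH_trans [eV_refl [_ [_ [eH_add [_ [eH_act _]]]]]]]]].
case: iso => [[rH_in rV_in] [[rH_inj _] [_ [[rH_add rH_0] [_ [rH_act _]]]]]].
pose l a := phV (CIn a (CHole nil) nil); pose l' a := rV (l a).
have lift f : H0 (ev l' f) /\ eH (rH (ev l f)) (ev l' f).
  apply: (ev_related (R := fun x x' => H0 x' /\ eH (rH x) x')).
  - by split=> //; apply: rH_0.
  - move=> x x' y y' [Hx' Ex] [Hy' Ey]; have Hxy' := H0_add _ _ Hx' Hy'; split=> //.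
    apply: (eH_trans _ _ _ (rH_in _) (H0_add _ _ (rH_in x) (rH_in y)) Hxy' (rH_add x y)).
    exact: eH_add _ _ _ _ (rH_in x) Hx' (rH_in y) Hy' Ex Ey.
  - move=> a x x' [Hx' Ex]; have Vl := rV_in (l a).
    have Hax' := H0_act _ _ Vl Hx'; split=> //.
    apply: (eH_trans _ _ _ (rH_in _) (H0_act _ _ Vl (rH_in x)) Hax' (rH_act (l a) x)).
    exact: (eH_act _ _ _ _ Vl Vl (rH_in x) Hx' (eV_refl _ Vl) Ex).
have [H1 E1] := lift (fill v (f1 ++ f2)%list).
have [H2 E2] := lift (fill v f1 ++ fill v f2)%list.
rewrite !(free_morphism_evE phi); apply: rH_inj.
apply: (eH_trans _ _ _ (rH_in _) H1 (rH_in _) E1).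
rewrite (twoG _ _ _ (ev_free_morphism l') v f1 f2 Hp).
exact: (eH_sym _ _ (rH_in _) H2 E2).
Qed.

(** * Embedding a 2-distributive algebra into a wreath product *)

Lemma finite_relabelling (X : Type) (L : list X) (x0 : X) :
  exists n (enc : X -> 'I_n.+1) (dec : 'I_n.+1 -> X),
    forall x, List.In x L -> dec (enc x) = x.
Proof.
pose P x i := i < List.length L /\ List.nth i L x0 = x.
exists (List.length L), (fun x => inord (epsilon (inhabits 0) (P x))),
  (fun i => List.nth i L x0) => x Hx.
have [i [/ltP Hi Ei]] := List.In_nth L x x0 Hx.
have [Hlt Ex] : P x (epsilon (inhabits 0) (P x)) by apply: epsilon_spec; exists i.
by rewrite inordK // ltnW.
Qed.

Lemma path_in_tmap (A B : Type) (m : A -> B) (f : forest A) q :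
  path_in (List.map (tmap m) f) q <-> exists2 p, path_in f p & q = List.map m p.
Proof.
split.
  elim: q f => [|k q IH] f /=; first by exists nil.
  move=> [cs' [/List.in_map_iff [[a cs] [[<- Ecs] Hin]] Hq]]; subst cs'.
  by have [p Hp ->] := IH _ Hq; exists (a :: p) => //; exists cs.
move=> [p Hp ->]; elim: p f Hp => [|a p IH] f //= [cs [Hin Hp]].
by exists (List.map (tmap m) cs); split; [apply: List.in_map Hin | apply: IH].
Qed.

Lemma same_paths_tmap (A B : Type) (m : A -> B) (f g : forest A) :
  same_paths f g -> same_paths (List.map (tmap m) f) (List.map (tmap m) g).
Proof.
by move=> Hfg q; rewrite !path_in_tmap; split=> -[p /Hfg Hp ->]; exists p.
Qed.

Lemma ev_tmap (F : forest_algebra) (A B : Type) (l : A -> fV F) (l' : B -> fV F)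
    (m : B -> A) (f : forest B) :
  (forall b, List.In b (fletters f) -> l (m b) = l' b) ->
  ev l (List.map (tmap m) f) = ev l' f.
Proof.
by move=> Hf; rewrite /ev feval_tmap; apply: feval_eq_in => b /Hf ->.
Qed.

(* Two-distributivity is stated for finite alphabets only; relabelling the   *)
(* finitely many letters that occur extends it to arbitrary alphabets.       *)
Lemma two_distributive_act_ev (F : forest_algebra) (A : Type) (l : A -> fV F)
    (u : fV F) (f1 f2 : forest A) :
  two_distributive F -> same_paths f1 f2 ->
  act u (ev l (f1 ++ f2)%list) = hadd (act u (ev l f1)) (act u (ev l f2)).
Proof.
move=> twoF Hp.
have [n [enc [dec Hdec]]] :=
  finite_relabelling (u :: List.map l (fletters (f1 ++ f2)%list)) u.
pose m a := enc (l a).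
have ev_m f : (forall a, List.In a (fletters f) -> List.In a (fletters (f1 ++ f2)%list)) ->
    ev dec (List.map (tmap m) f) = ev l f.
  by move=> Hf; apply: ev_tmap => a /Hf Ha; apply: Hdec; right; apply: List.in_map.
have Hu : dec (enc u) = u by apply: Hdec; left.
have := twoF _ _ _ (ev_free_morphism dec) (CIn (enc u) (CHole nil) nil) _ _
  (same_paths_tmap m Hp).
have letters_cat a : List.In a (fletters (f1 ++ f2)%list) <->
    List.In a (fletters f1) \/ List.In a (fletters f2).
  by rewrite /fletters List.flat_map_app List.in_app_iff.
rewrite /= !List.app_nil_r -List.map_app ev_node ev_cons ev_node Hu !ev_m //;
  by move=> a Ha; apply/letters_cat; auto.
Qed.

Section PowersetAlgebra.
Variable T : Type.

Definition pset := T -> Prop.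
Definition psetU (A B : pset) : pset := fun x => A x \/ B x.
Definition pset0 : pset := fun _ => False.

Lemma pset_ext (A B : pset) : (forall x, A x <-> B x) -> A = B.
Proof.
by move=> AB; apply: functional_extensionality => x; apply: propositional_extensionality.
Qed.

Definition union_map :=
  {phi : pset -> pset | forall A B, phi (psetU A B) = psetU (phi A) (phi B)}.

Lemma union_map_eq (v w : union_map) : (forall A, sval v A = sval w A) -> v = w.
Proof.
case: v w => [f fU] [g gU] /= /functional_extensionality Efg; subst g.
by congr exist; apply: proof_irrelevance.
Qed.

Definition union_map_comp (v w : union_map) : union_map.
Proof. by exists (fun A => sval v (sval w A)) => A B; rewrite (svalP w) (svalP v). Defined.

Definition union_map_id : union_map.
Proof. by exists id. Defined.

Definition union_map_ins (A : pset) : union_map.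
Proof. by exists (psetU A) => B C; apply: pset_ext => x; rewrite /psetU; tauto. Defined.

Definition powerset_algebra : forest_algebra.
Proof.
refine (@ForestAlgebra pset union_map psetU pset0 union_map_comp union_map_id
  (fun v => sval v) union_map_ins _ _ _ _ _ _ _ _ _ _ _ _ _);
  try by move=> *; apply: pset_ext => x; rewrite /= /psetU /pset0; tauto.
all: try by move=> *; apply: union_map_eq.
move=> A; exists (union_map_ins A).
by apply: pset_ext => x; rewrite /= /psetU /pset0; tauto.
Defined.

Lemma psetUid (A : pset) : psetU A A = A.
Proof. by apply: pset_ext => x; rewrite /psetU; tauto. Qed.

Lemma powerset_algebra_distributive : distributive powerset_algebra.
Proof. by move=> v; apply: (svalP v). Qed.

End PowersetAlgebra.

Definition cons_map (Y : Type) (y : Y) : union_map (list Y).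
Proof.
exists (fun A q => if q is x :: q' then x = y /\ (q' = nil \/ A q') else False).
by move=> A B; apply: pset_ext => -[|x q]; rewrite /psetU; tauto.
Defined.

Section NonemptyKeyPaths.
Variables (A K : Type) (key : A -> forest A -> K).

(* The empty path is left out so that the empty forest is sent to [pset0]. *)
Definition key_paths_ne (f : forest A) : pset (list K) :=
  fun q => q <> nil /\ key_path key f q.

Lemma key_paths_ne_nil : key_paths_ne nil = @pset0 (list K).
Proof. by apply: pset_ext => -[|k q]; rewrite /key_paths_ne /=; firstorder. Qed.

Lemma key_paths_ne_cat f g :
  key_paths_ne (f ++ g)%list = psetU (key_paths_ne f) (key_paths_ne g).
Proof. by apply: pset_ext => q; rewrite /key_paths_ne /psetU key_path_cat; tauto. Qed.

Lemma key_paths_ne_node a cs :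
  sval (cons_map (key a cs)) (key_paths_ne cs) = key_paths_ne [:: Node a cs].
Proof.
apply: pset_ext => -[|k q] /=; first by split=> -[].
rewrite /key_paths_ne key_path_cons /=; split.
  by move=> [<- Hq]; split=> //; left; split=> //; case: Hq => [->|[]].
move=> [_ [[<- Hq]|[? [? [[] _ _]]]]]; split=> //.
by case: q Hq => [|k' q] Hq; [left|right].
Qed.

Lemma key_path_of_paths_ne f g :
  key_paths_ne f = key_paths_ne g -> forall q, key_path key f q <-> key_path key g q.
Proof.
move=> E [|k q] //; split=> Hq.
  by have [] : key_paths_ne g (k :: q) by rewrite -E.
by have [] : key_paths_ne f (k :: q) by rewrite E.
Qed.

End NonemptyKeyPaths.

Definition root_paths (A : Type) (f : forest A) : pset (list A) :=
  key_paths_ne (fun a _ => a) f.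

Lemma root_paths_cat (A : Type) (f g : forest A) :
  root_paths (f ++ g)%list = psetU (root_paths f) (root_paths g).
Proof. exact: key_paths_ne_cat. Qed.

Lemma same_paths_of_root_paths (A : Type) (f g : forest A) :
  root_paths f = root_paths g -> same_paths f g.
Proof. by move=> /key_path_of_paths_ne E q; rewrite -!key_path_letter. Qed.

Definition same_image (B C : Type) (R : B -> C -> Prop) (x y : B) : Prop :=
  exists c, R x c /\ R y c.

Lemma same_image_trans (B C : Type) (R : B -> C -> Prop) x y z :
  (forall x c c', R x c -> R x c' -> c = c') ->
  same_image R x y -> same_image R y z -> same_image R x z.
Proof.
move=> Rfun [c [Rxc Ryc]] [c' [Ryc' Rzc']].
by exists c; split=> //; rewrite (Rfun _ _ _ Ryc Ryc').
Qed.

Section Embedding.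
Variable F : forest_algebra.
Hypothesis twoF : two_distributive F.

Local Notation X := (fV F).

Definition node_type (a : X) (cs : forest X) : X * pset (list X) := (a, root_paths cs).

Local Notation W :=
  (wreath (powerset_algebra (list (X * pset (list X)))) (powerset_algebra (list X))).

Definition embed (f : forest X) : fH W := (key_paths_ne node_type f, root_paths f).

Definition embed_letter (u : X) : fV W := (fun P => cons_map (u, P), cons_map u).

Definition forest_value (f : forest X) : fH F := ev id f.

Lemma embed_nil : embed nil = hzero W.
Proof. by rewrite /embed /root_paths !key_paths_ne_nil. Qed.

Lemma embed_cat f g : embed (f ++ g)%list = hadd (embed f) (embed g).
Proof. by rewrite /embed root_paths_cat key_paths_ne_cat. Qed.

Lemma act_embed_letter u t : act (embed_letter u) (embed t) = embed [:: Node u t].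
Proof. by rewrite /embed /root_paths -!key_paths_ne_node. Qed.

Lemma embed_determines_value f g : embed f = embed g -> forest_value f = forest_value g.
Proof.
case=> /key_path_of_paths_ne same_types _.
apply: (ev_key_path_eq (key := node_type)) => //.
- by move=> a a' cs cs' [].
- by move=> a cs cs' [E]; rewrite /node_type root_paths_cat E psetUid.
- move=> a cs cs' [/same_paths_of_root_paths E].
  exact: two_distributive_act_ev.
Qed.

Definition represents (z : fH W) (h : fH F) : Prop :=
  exists t, z = embed t /\ forest_value t = h.

Definition simulates (w : fV W) (u : fV F) : Prop :=
  forall z h, represents z h -> represents (act w z) (act u h).

Definition rep_forest (h : fH F) : forest X := [:: Node (ins h) nil].

Lemma represents_unique z h h' : represents z h -> represents z h' -> h = h'.
Proof. by move=> [t [-> <-]] [t' [/embed_determines_value E <-]]. Qed.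

Lemma represents_rep_forest h : represents (embed (rep_forest h)) h.
Proof.
by exists (rep_forest h); split=> //; rewrite /forest_value ev_node insE hadd0r.
Qed.

Lemma represents_hzero : represents (hzero W) (hzero F).
Proof. by exists nil; rewrite embed_nil. Qed.

Lemma represents_hadd z z' h h' :
  represents z h -> represents z' h' -> represents (hadd z z') (hadd h h').
Proof.
move=> [t [-> <-]] [t' [-> <-]].
by exists (t ++ t')%list; rewrite embed_cat /forest_value ev_cat.
Qed.

Lemma simulates_unique w u u' : simulates w u -> simulates w u' -> u = u'.
Proof.
move=> Hu Hu'; apply: act_faithful => h; have rep_h := represents_rep_forest h.
exact: represents_unique (Hu _ _ rep_h) (Hu' _ _ rep_h).
Qed.

Lemma simulates_embed_letter u : simulates (embed_letter u) u.
Proof.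
move=> _ _ [t [-> <-]].
by exists [:: Node u t]; rewrite act_embed_letter /forest_value ev_node.
Qed.

Lemma simulates_vone : simulates (vone W) (vone F).
Proof. by move=> z h; rewrite !act1. Qed.

Lemma simulates_vmul w w' u u' :
  simulates w u -> simulates w' u' -> simulates (vmul w w') (vmul u u').
Proof. by move=> Hu Hu' z h /Hu' /Hu; rewrite !actM. Qed.

Lemma simulates_ins z h : represents z h -> simulates (ins z) (ins h).
Proof. by move=> Hzh z' h' /(represents_hadd Hzh); rewrite !insE. Qed.

Definition represented (z : fH W) : Prop := exists h, represents z h.

Definition simulating (w : fV W) : Prop := exists u, simulates w u.

Lemma embedding_subalgebra : subalgebra represented simulating.
Proof.
split; first by exists (hzero F); apply: represents_hzero.
split; first by move=> z z' [h Hh] [h' Hh']; exists (hadd h h'); apply: represents_hadd.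
split; first by exists (vone F); apply: simulates_vone.
split; first by move=> w w' [u Hu] [u' Hu']; exists (vmul u u'); apply: simulates_vmul.
split; first by move=> w z [u Hu] [h Hh]; exists (act u h); apply: Hu.
by move=> z [h Hh]; exists (ins h); apply: simulates_ins.
Qed.

Lemma embedding_congruence :
  congruence represented simulating (same_image represents) (same_image simulates).
Proof.
split; first by move=> z [h Hh]; exists h.
split; first by move=> z z' _ _ [h [Hh Hh']]; exists h.
split.
  by move=> ? ? ? _ _ _; apply: same_image_trans => ? ? ?; apply: represents_unique.
split; first by move=> w [u Hu]; exists u.
split; first by move=> w w' _ _ [u [Hu Hu']]; exists u.
split.
  by move=> ? ? ? _ _ _; apply: same_image_trans => ? ? ?; apply: simulates_unique.
split.
  move=> ? ? ? ? _ _ _ _ [h [Hh Hh']] [k [Hk Hk']].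
  by exists (hadd h k); split; apply: represents_hadd.
split.
  move=> ? ? ? ? _ _ _ _ [u [Hu Hu']] [v [Hv Hv']].
  by exists (vmul u v); split; apply: simulates_vmul.
split.
  move=> ? ? ? ? _ _ _ _ [u [Hu Hu']] [h [Hh Hh']].
  by exists (act u h); split; [apply: Hu | apply: Hu'].
by move=> ? ? _ _ [h [Hh Hh']]; exists (ins h); split; apply: simulates_ins.
Qed.

Lemma embedding_quotient_iso :
  quotient_iso represented simulating (same_image represents) (same_image simulates)
    (fun h => embed (rep_forest h)) embed_letter.
Proof.
have rep_ok := represents_rep_forest; have letter_ok := simulates_embed_letter.
split; first by split=> [h|u]; [exists h | exists u].
split.
  split=> [h h' [k [Hk Hk']]|u u' [v [Hv Hv']]].
    by rewrite (represents_unique (rep_ok h) Hk) (represents_unique (rep_ok h') Hk').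
  by rewrite (simulates_unique (letter_ok u) Hv) (simulates_unique (letter_ok u') Hv').
split; first by split=> [z [h Hh]|w [u Hu]]; [exists h, h | exists u, u].
split.
  split; first by move=> h h'; exists (hadd h h'); split; [|apply: represents_hadd].
  by exists (hzero F); split; [|apply: represents_hzero].
split.
  split; first by move=> u u'; exists (vmul u u'); split; [|apply: simulates_vmul].
  by exists (vone F); split; [|apply: simulates_vone].
split; first by move=> u h; exists (act u h); split; [|apply: letter_ok].
by move=> h; exists (ins h); split; [|apply: simulates_ins].
Qed.

Lemma divides_wreath_powerset : divides F W.
Proof.
exists represented, simulating, (same_image represents), (same_image simulates),
  (fun h => embed (rep_forest h)), embed_letter.
by split; [|split]; [apply: embedding_subalgebra | apply: embedding_congruence
                     | apply: embedding_quotient_iso].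
Qed.

End Embedding.

Theorem mainTheorem4 (F : forest_algebra) :
  two_distributive F <->
  exists G1 G2 : forest_algebra,
    [/\ distributive G1, distributive G2 & divides F (wreath G1 G2)].
Proof.
split=> [twoF | [G1 [G2 [distG1 distG2 divF]]]]; last first.
  exact: two_distributive_divides divF (two_distributive_wreath distG1 distG2).
do 2 eexists; split; last exact: divides_wreath_powerset twoF.
all: exact (@powerset_algebra_distributive _).
Qed.
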